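(* Let $H$ be an RB function for $\mathcal X_r$, $\eta\ge\max_{p\in\mathcal Q}H(\mathbf f[p])$, $\epsilon>0$, and let $\mathcal V(\vec a,\vec x,\epsilon)$ be a $1-\epsilon$ confidence region for $\frac1n\sum_{j=1}^n\mathbf f[p_{\vec a_{j-1},\vec x_{j-1}}]$, with associated set $V$. Then for every $(\vec a,\vec x)\in V$, $$-\log_2P(\vec a\mid\vec x)\ge nH(\mathcal V(\vec a,\vec x,\epsilon))-\nu(\vec x)\eta .$$
   Context: Setting. A Bell device consists of $k$ boxes; box $i$ takes inputs in a finite set $\mathcal X_i$ and produces outputs in a finite set $\mathcal A_i$; $\mathcal X=\prod_i\mathcal X_i$, $\mathcal A=\prod_i\mathcal A_i$. A single-round behavior is $p=(p(a\mid x))_{a\in\mathcal A,x\in\mathcal X}$; $\mathcal Q$ is the set of quantum behaviors (those realizable by a $k$-partite quantum state and local measurements on each box). A Bell expression is $f\in\mathbb R^{|\mathcal A|\times|\mathcal X|}$ with $f[p]=\sum_{a,x}f(a,x)p(a\mid x)$; fix $\mathbf f=(f_1,\dots,f_t)$, $\mathbf f[p]=(f_1[p],\dots,f_t[p])$, $\mathbf f[\mathcal Q]=\{\mathbf f[p]:p\in\mathcal Q\}$. $n$-round model. $\vec x\in\mathcal X^n$, $\vec a\in\mathcal A^n$, prefixes $\vec x_j,\vec a_j$ (empty for $j=0$). An $n$-round device behavior is $P(\vec a\mid\vec x)=\prod_{j=1}^n p_{\vec a_{j-1},\vec x_{j-1}}(a_j\mid x_j)$ with every $p_{\vec a_{j-1},\vec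 x_{j-1}}\in\mathcal Q$. Inputs are drawn according to $\Pi(\vec x)=\prod_j\pi(x_j)$ for a probability distribution $\pi$ on $\mathcal X$, and $P(\vec a,\vec x)=P(\vec a\mid\vec x)\Pi(\vec x)$ defines the joint distribution $P_{AX}$. RB function. For a nonempty $\mathcal X_r\subseteq\mathcal X$, $H:\mathbf f[\mathcal Q]\to[0,\log_2|\mathcal A|]$ is RB if (1) $\min_{a\in\mathcal A,x\in\mathcal X_r}(-\log_2p(a\mid x))\ge H(\mathbf f[p])$ for all $p\in\mathcal Q$ and (2) $H(q\mathbf f[p_1]+(1-q)\mathbf f[p_2])\le qH(\mathbf f[p_1])+(1-q)H(\mathbf f[p_2])$ for $q\in[0,1]$, $p_1,p_2\in\mathcal Q$. For a set $\mathcal V\subseteq\mathbb R^t$, $H(\mathcal V)$ denotes a fixed number satisfying $H(\mathcal V)\le\inf\{H(\mathbf y):\mathbf y\in\mathbf f[\mathcal Q]\cap\mathcal V\}$, and $H(\mathcal V)=0$ if $\mathbf f[\mathcal Q]\cap\mathcal V=\emptyset$. $\nu(\vec x)$ is the number of $j$ with $x_j\notin\mathcal X_r$. Confidence region. A $1-\epsilon$ confidence region is an assignment $(\vec a,\vec x)\mapsto\mathcal V(\vec a,\vec x,\epsilon)\subseteq\mathbb R^t$ such that for every $n$-round device behavior, $\Pr_{P_{AX}}\big[\frac1n\sum_{j=1}^n\mathbf f[p_{\vec a_{j-1},\vec x_{j-1}}]\in\mathcal V(\vec a,\vec x,\epsilon)\big]\ge1-\epsilon$. The associated set is $V=\{(\vec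 a,\vec x):\frac1n\sum_{j=1}^n\mathbf f[p_{\vec a_{j-1},\vec x_{j-1}}]\in\mathcal V(\vec a,\vec x,\epsilon)\}$. *)

From mathcomp Require Import all_boot.
From Stdlib Require Import Reals ClassicalEpsilon.
Set Implicit Arguments. Unset Strict Implicit. Unset Printing Implicit Defensive.

Local Open Scope R_scope.

Definition sumR {T : finType} (F : T -> R) : R := \big[Rplus/0]_(i : T) F i.
Definition prodR {T : finType} (F : T -> R) : R := \big[Rmult/1]_(i : T) F i.

Definition mlog2 (y : R) : R := - (ln y / ln 2).

Definition ind (P : Prop) : R :=
  if excluded_middle_informative P then 1 else 0.

Section Bell.
Variables (A X : finType) (t : nat).

Definition behavior := A -> X -> R.

Definition is_behavior (p : behavior) : Prop :=
  (forall a x, 0 <= p a x) /\ (forall x, sumR (fun a => p a x) = 1).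

Definition fvec (f : 'I_t -> A -> X -> R) (p : behavior) : 'I_t -> R :=
  fun i => sumR (fun a => sumR (fun x => f i a x * p a x)).

Definition convex_set (Q : behavior -> Prop) : Prop :=
  forall p1 p2 q, Q p1 -> Q p2 -> 0 <= q <= 1 ->
    Q (fun a x => q * p1 a x + (1 - q) * p2 a x).

(* RB function H for X_r (H given as a total function on R^t; only its
   values on f[Q] matter) *)
Definition RB (Q : behavior -> Prop) (f : 'I_t -> A -> X -> R)
    (Xr : pred X) (H : ('I_t -> R) -> R) : Prop :=
  (forall p, Q p -> 0 <= H (fvec f p) <= ln (INR #|A|) / ln 2) /\
  (forall p, Q p -> forall a x, Xr x -> 0 < p a x -> H (fvec f p) <= mlog2 (p a x)) /\
  (forall q p1 p2, 0 <= q <= 1 -> Q p1 -> Q p2 ->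
     H (fun i => q * fvec f p1 i + (1 - q) * fvec f p2 i)
       <= q * H (fvec f p1) + (1 - q) * H (fvec f p2)).

Definition HV_spec (Q : behavior -> Prop) (f : 'I_t -> A -> X -> R)
    (H : ('I_t -> R) -> R) (HV : (('I_t -> R) -> Prop) -> R) : Prop :=
  (forall V p, Q p -> V (fvec f p) -> HV V <= H (fvec f p)) /\
  (forall V, (forall p, Q p -> ~ V (fvec f p)) -> HV V = 0).

Variable n : nat.

(* n-round device: the behavior used in round j (0-based) is
   dev (a_1..a_j) (x_1..x_j), i.e. it depends on the prefixes *)
Definition device := seq A -> seq X -> behavior.

Definition is_device (Q : behavior -> Prop) (dev : device) : Prop :=
  forall sa sx, Q (dev sa sx).

Definition Pcond (dev : device) (av : n.-tuple A) (xv : n.-tuple X) : R :=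
  prodR (fun j : 'I_n => dev (take j av) (take j xv) (tnth av j) (tnth xv j)).

Definition Pin (pi : X -> R) (xv : n.-tuple X) : R :=
  prodR (fun j : 'I_n => pi (tnth xv j)).

Definition Pjoint (dev : device) (pi : X -> R) av xv : R :=
  Pcond dev av xv * Pin pi xv.

Definition favg (f : 'I_t -> A -> X -> R) (dev : device)
    (av : n.-tuple A) (xv : n.-tuple X) : 'I_t -> R :=
  fun i => / INR n * sumR (fun j : 'I_n => fvec f (dev (take j av) (take j xv)) i).

Definition Prob (dev : device) (pi : X -> R)
    (E : n.-tuple A -> n.-tuple X -> Prop) : R :=
  sumR (fun av : n.-tuple A => sumR (fun xv : n.-tuple X =>
    ind (E av xv) * Pjoint dev pi av xv)).

Definition confidence_region (Q : behavior -> Prop) (f : 'I_t -> A -> X -> R)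
    (pi : X -> R) (eps : R)
    (CR : n.-tuple A -> n.-tuple X -> R -> (('I_t -> R) -> Prop)) : Prop :=
  forall dev, is_device Q dev ->
    Prob dev pi (fun av xv => CR av xv eps (favg f dev av xv)) >= 1 - eps.

Definition nu (Xr : pred X) (xv : n.-tuple X) : nat := count (predC Xr) xv.

End Bell.

(* Every round contributes at least H(f[p_j]) to -log2 P(a|x): by property (1) of an RB
   function when x_j is in X_r, and trivially, at the price of eta, otherwise.  Convexity
   of H (Jensen) bounds the sum of the H(f[p_j]) below by n H((1/n) sum_j f[p_j]), which
   is H(f[p]) for the mean behavior p, a point of f[Q] lying in the confidence region;
   hence it is at least n H(V). *)
From mathcomp Require Import all_boot.
From HB Require Import structures.
From Stdlib Require Import Reals Lra FunctionalExtensionality.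
Set Implicit Arguments. Unset Strict Implicit. Unset Printing Implicit Defensive.
Local Open Scope R_scope.

HB.instance Definition _ := Monoid.isComLaw.Build R 0 Rplus
  (fun x y z => esym (Rplus_assoc x y z)) Rplus_comm Rplus_0_l.
HB.instance Definition _ := Monoid.isComLaw.Build R 1 Rmult
  (fun x y z => esym (Rmult_assoc x y z)) Rmult_comm Rmult_1_l.
HB.instance Definition _ := Monoid.isMulLaw.Build R 0 Rmult Rmult_0_l Rmult_0_r.
HB.instance Definition _ :=
  Monoid.isAddLaw.Build R Rmult Rplus Rmult_plus_distr_r Rmult_plus_distr_l.

Lemma sumRD (T : finType) (F G : T -> R) :
  sumR (fun i => F i + G i) = sumR F + sumR G.
Proof. exact: big_split. Qed.

Lemma sumR_le (T : finType) (F G : T -> R) :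
  (forall i, F i <= G i) -> sumR F <= sumR G.
Proof.
move=> FG; apply: (big_ind2 Rle) => [|x1 y1 x2 y2|i _]; first exact: Rle_refl.
  exact: Rplus_le_compat.
exact: FG.
Qed.

(* [big_ord_recr] with the [widen_ord]/[ord_max] casts already erased, so that no [simpl]
   (which would unfold [INR]) is needed afterwards. *)
Lemma big_Rplus_nat_recr k (F : nat -> R) :
  \big[Rplus/0]_(j < k.+1) F j = \big[Rplus/0]_(j < k) F j + F k.
Proof. exact: big_ord_recr. Qed.

Lemma le_sumR (T : finType) (F : T -> R) i :
  (forall j, 0 <= F j) -> F i <= sumR F.
Proof.
move=> F0; rewrite /sumR (bigD1 i) //=.
suff : 0 <= \big[Rplus/0]_(j | j != i) F j by lra.
apply: (big_ind (Rle 0)) => [|x y|j _]; first exact: Rle_refl.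
  exact: Rplus_le_le_0_compat.
exact: F0.
Qed.

Lemma prodR_factor_gt0 (T : finType) (F : T -> R) :
  (forall i, 0 <= F i) -> 0 < prodR F -> forall i, 0 < F i.
Proof.
move=> F0 Fpos i; case: (F0 i) => // Fi0.
by move: Fpos; rewrite /prodR (bigD1 i) //= -Fi0 Rmult_0_l => /Rlt_irrefl.
Qed.

Lemma sumR_count_indicator (X : finType) (n : nat) (P : pred X) (xv : n.-tuple X) c :
  sumR (fun j : 'I_n => if P (tnth xv j) then 0 else c) = INR (nu P xv) * c.
Proof.
rewrite /nu -sum1_count big_tuple big_mkcond.
rewrite (big_morph INR plus_INR (erefl (INR 0))) big_distrl.
by apply: eq_bigr => j _ /=; case: (P (tnth xv j)) => /=; ring.
Qed.

Lemma ln2_gt0 : 0 < ln 2.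
Proof. rewrite -ln_1; apply: ln_increasing; lra. Qed.

Lemma mlog2_1 : mlog2 1 = 0.
Proof. by rewrite /mlog2 ln_1 /Rdiv Rmult_0_l Ropp_0. Qed.

Lemma mlog2_mul x y : 0 < x -> 0 < y -> mlog2 (x * y) = mlog2 x + mlog2 y.
Proof. move=> x0 y0; rewrite /mlog2 ln_mult //; field; exact: Rgt_not_eq ln2_gt0. Qed.

Lemma mlog2_ge0 x : 0 < x -> x <= 1 -> 0 <= mlog2 x.
Proof.
move=> x0 x1; have lnx : ln x <= 0.
  by rewrite -ln_1; case: x1 => [x1 | ->]; [apply/Rlt_le/ln_increasing | apply: Rle_refl].
have := Rinv_0_lt_compat _ ln2_gt0; rewrite /mlog2 /Rdiv; nra.
Qed.

Lemma mlog2_prodR (T : finType) (F : T -> R) :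
  (forall i, 0 < F i) -> mlog2 (prodR F) = sumR (fun i => mlog2 (F i)).
Proof.
move=> Fpos; suff [] : 0 < prodR F /\ mlog2 (prodR F) = sumR (fun i => mlog2 (F i)) by [].
apply: (big_rec2 (fun p s => 0 < p /\ mlog2 p = s)) => [|i p s _ [p0 <-]].
  by split; [lra | exact: mlog2_1].
by split; [exact: Rmult_lt_0_compat | exact: mlog2_mul].
Qed.

Lemma behavior_le1 (A X : finType) (p : behavior A X) a x :
  is_behavior p -> p a x <= 1.
Proof. by case=> p0 p1; rewrite -(p1 x); exact: le_sumR a (p0^~ x). Qed.

Lemma inv_INR_S_01 k : 0 <= / INR k.+1 <= 1.
Proof.
have k1 : 1 <= INR k.+1 by rewrite S_INR; have := pos_INR k; lra.
split; first by apply/Rlt_le/Rinv_0_lt_compat; lra.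
by rewrite -Rinv_1; apply: Rinv_le_contravar; lra.
Qed.

Section BellBound.
Variables (A X : finType) (t : nat) (f : 'I_t -> A -> X -> R).

Definition mix (q : R) (p1 p2 : behavior A X) : behavior A X :=
  fun a x => q * p1 a x + (1 - q) * p2 a x.

Definition meanb (k : nat) (g : nat -> behavior A X) : behavior A X :=
  fun a x => / INR k * \big[Rplus/0]_(j < k) g j a x.

Lemma fvec_mix q p1 p2 :
  fvec f (mix q p1 p2) = fun i => q * fvec f p1 i + (1 - q) * fvec f p2 i.
Proof.
apply: functional_extensionality => i; rewrite /fvec /sumR !big_distrr -big_split.
apply: eq_bigr => a _; rewrite !big_distrr -big_split.
by apply: eq_bigr => x _; rewrite /mix /=; ring.
Qed.

Lemma fvec_meanb k g :
  fvec f (meanb k g) = fun i => / INR k * \big[Rplus/0]_(j < k) fvec f (g j) i.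
Proof.
apply: functional_extensionality => i.
have -> : fvec f (meanb k g) i = / INR k * fvec f (fun a x => \big[Rplus/0]_(j < k) g j a x) i.
  rewrite /fvec /sumR big_distrr; apply: eq_bigr => a _.
  by rewrite big_distrr; apply: eq_bigr => x _; rewrite /meanb /=; ring.
congr (_ * _); rewrite /fvec /sumR [RHS]exchange_big; apply: eq_bigr => a _.
by rewrite [RHS]exchange_big; apply: eq_bigr => x _; rewrite big_distrr.
Qed.

Lemma meanb1 g : meanb 1 g = g O.
Proof.
apply: functional_extensionality => a; apply: functional_extensionality => x.
by rewrite /meanb big_ord1 /= Rinv_1 Rmult_1_l.
Qed.

Lemma meanbS k g : meanb k.+2 g = mix (/ INR k.+2) (g k.+1) (meanb k.+1 g).
Proof.
apply: functional_extensionality => a; apply: functional_extensionality => x.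
have k1 : 0 < INR k.+1 by apply: lt_0_INR; apply/ltP.
rewrite /meanb /mix [INR k.+2]S_INR.
rewrite (big_Rplus_nat_recr k.+1 (fun j => g j a x)); field; lra.
Qed.

Variables (Q : behavior A X -> Prop) (H : ('I_t -> R) -> R).
Hypothesis Q_convex : convex_set Q.
Hypothesis H_convex : forall q p1 p2, 0 <= q <= 1 -> Q p1 -> Q p2 ->
  H (fun i => q * fvec f p1 i + (1 - q) * fvec f p2 i)
    <= q * H (fvec f p1) + (1 - q) * H (fvec f p2).

Section Jensen.
Variables (g : nat -> behavior A X).
Hypothesis gQ : forall j, Q (g j).

Lemma meanb_in_Q k : Q (meanb k.+1 g).
Proof.
elim: k => [|k IH]; first by rewrite meanb1.
by rewrite meanbS; apply: Q_convex => //; exact: inv_INR_S_01.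
Qed.

Lemma jensen_meanb k :
  INR k.+1 * H (fvec f (meanb k.+1 g)) <= \big[Rplus/0]_(j < k.+1) H (fvec f (g j)).
Proof.
elim: k => [|k IH]; first by rewrite meanb1 big_ord1 /=; lra.
rewrite meanbS fvec_mix (big_Rplus_nat_recr k.+1 (fun j => H (fvec f (g j)))).
have Hmix := H_convex (inv_INR_S_01 k.+1) (gQ k.+1) (meanb_in_Q k).
have k1 : 0 < INR k.+1 by apply: lt_0_INR; apply/ltP.
have k2 : INR k.+2 = INR k.+1 + 1 by rewrite S_INR.
have e1 : INR k.+2 * / INR k.+2 = 1 by field; lra.
have e2 : INR k.+2 * (1 - / INR k.+2) = INR k.+1 by rewrite k2; field; lra.
apply: Rle_trans; first by apply: Rmult_le_compat_l; [lra | exact: Hmix].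
by rewrite Rmult_plus_distr_l -!Rmult_assoc e1 e2; lra.
Qed.

Lemma HV_le_sum_H (HV : (('I_t -> R) -> Prop) -> R) (V : ('I_t -> R) -> Prop) k :
  HV_spec Q f H HV -> V (fvec f (meanb k g)) ->
  INR k * HV V <= \big[Rplus/0]_(j < k) H (fvec f (g j)).
Proof.
case: k => [|k] [HV_inf _] Vmean; first by rewrite big_ord0 /=; lra.
have k1 : 0 < INR k.+1 by apply: lt_0_INR; apply/ltP.
apply: Rle_trans (jensen_meanb k); apply: Rmult_le_compat_l; first lra.
exact: HV_inf (meanb_in_Q k) Vmean.
Qed.

End Jensen.

Variables (Xr : pred X) (eta : R).
Hypothesis Q_behavior : forall p, Q p -> is_behavior p.
Hypothesis H_min_entropy :
  forall p, Q p -> forall a x, Xr x -> 0 < p a x -> H (fvec f p) <= mlog2 (p a x).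
Hypothesis H_le_eta : forall p, Q p -> H (fvec f p) <= eta.

Lemma H_le_mlog2_round p a x : Q p -> 0 < p a x ->
  H (fvec f p) <= mlog2 (p a x) + (if Xr x then 0 else eta).
Proof.
move=> Qp p0; case: ifP => [Xx | _]; first by rewrite Rplus_0_r; exact: H_min_entropy.
have := mlog2_ge0 p0 (behavior_le1 a x (Q_behavior Qp)); have := H_le_eta Qp; lra.
Qed.

Lemma sum_H_le_mlog2_Pcond n (dev : device A X) (av : n.-tuple A) (xv : n.-tuple X) :
  is_device Q dev -> 0 < Pcond dev av xv ->
  \big[Rplus/0]_(j < n) H (fvec f (dev (take j av) (take j xv)))
    <= mlog2 (Pcond dev av xv) + INR (nu Xr xv) * eta.
Proof.
move=> devQ Ppos.
have rounds_pos := prodR_factor_gt0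
  (fun j => (Q_behavior (devQ _ _)).1 _ _) Ppos.
rewrite /Pcond mlog2_prodR // -sumR_count_indicator -sumRD.
by apply: sumR_le => j; apply: H_le_mlog2_round.
Qed.

End BellBound.

Theorem lemma2 (A X : finType) (t n : nat)
  (Q : behavior A X -> Prop)
  (HQ : forall p, Q p -> is_behavior p)
  (HQconv : convex_set Q)
  (f : 'I_t -> A -> X -> R)
  (Xr : pred X) (HXr : exists x, Xr x)
  (H : ('I_t -> R) -> R) (HRB : RB Q f Xr H)
  (HV : (('I_t -> R) -> Prop) -> R) (HHV : HV_spec Q f H HV)
  (eta : R) (Heta : forall p, Q p -> H (fvec f p) <= eta)
  (pi : X -> R) (Hpi0 : forall x, 0 <= pi x) (Hpi1 : sumR pi = 1)
  (eps : R) (Heps : 0 < eps)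
  (CR : n.-tuple A -> n.-tuple X -> R -> (('I_t -> R) -> Prop))
  (HCR : confidence_region Q f pi eps CR) :
  forall dev : device A X, is_device Q dev ->
  forall (av : n.-tuple A) (xv : n.-tuple X),
    CR av xv eps (favg f dev av xv) ->
    0 < Pcond dev av xv ->
    mlog2 (Pcond dev av xv) >= INR n * HV (CR av xv eps) - INR (nu Xr xv) * eta.
Proof.
move=> dev devQ av xv in_region Ppos.
case: HRB => _ [H_min_entropy H_convex].
pose g j := dev (take j av) (take j xv).
have mean_in_region : CR av xv eps (fvec f (meanb n g)) by rewrite fvec_meanb.
have := HV_le_sum_H HQconv H_convex (fun j => devQ _ _) HHV mean_in_region.
have := sum_H_le_mlog2_Pcond HQ H_min_entropy Heta devQ Ppos.
lra.
Qed.
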